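(* Let $p$ be a prime, $k\geq 1$, $j\geq 0$ integers, and $r$ an integer with $1\leq r\leq p-1$. If $d_k(pn+r)\equiv 0\pmod p$ for all $n\geq 0$, then $d_{pj+k}(pn+r)\equiv 0\pmod p$ for all $n\geq 0$.
   Context: For each integer $k\geq 1$, the numbers $d_k(n)$ are defined by $\sum_{n\geq 0} d_k(n)q^n = \frac{f_2^k}{f_1^{3k+1}}$, where $f_r = \prod_{i\geq 1}(1-q^{ri})$. *)

From mathcomp Require Import all_boot all_order all_algebra.
Set Implicit Arguments. Unset Strict Implicit. Unset Printing Implicit Defensive.
Import GRing.Theory.
Local Open Scope ring_scope.

(* Truncation of f_r = prod_{i>=1} (1 - q^{r i}) to the factors i = 1..N,
   as a polynomial over int.  Its coefficients of q^m agree with those of f_r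
   for all m <= N (r >= 1). *)
Definition f_trunc (r N : nat) : {poly int} :=
  \prod_(1 <= i < N.+1) (1 - 'X^(r * i)).

(* Truncation of 1/f_1 = prod_{i>=1} 1/(1 - q^i) = prod_{i>=1} sum_{j>=0} q^{i j}
   to factors i = 1..N and geometric sums j = 0..N.  Its coefficients of q^m
   agree with those of 1/f_1 for all m <= N. *)
Definition inv_f1_trunc (N : nat) : {poly int} :=
  \prod_(1 <= i < N.+1) \sum_(0 <= j < N.+1) 'X^(i * j).

(* d_k(n) = coefficient of q^n in f_2^k / f_1^(3k+1). *)
Definition d (k n : nat) : int :=
  ((f_trunc 2 n) ^+ k * (inv_f1_trunc n) ^+ (3 * k + 1)) `_ n.

From mathcomp Require Import all_boot all_order all_algebra.
Set Implicit Arguments. Unset Strict Implicit. Unset Printing Implicit Defensive.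
Import GRing.Theory.
Local Open Scope ring_scope.

(* Over F_p every series g satisfies g^p = g(q^p), and
   f_2^(pj+k) / f_1^(3(pj+k)+1) = (f_2^k / f_1^(3k+1)) * (f_2^j / f_1^(3j))^p.
   So modulo p the generating function of d_(pj+k) is that of d_k times a
   series in q^p, and such a factor preserves the vanishing of all
   coefficients of index = r (mod p).  Truncating the products at degree N
   changes no coefficient of degree <= N, so the argument runs with
   polynomials. *)

Section EqModXn.
Variable R : nzRingType.
Implicit Types a b c e : {poly R}.

Definition eqmodXn (m : nat) a b := forall i, (i < m)%N -> a`_i = b`_i.

Lemma eqmodXnD m a b c e : eqmodXn m a b -> eqmodXn m c e -> eqmodXn m (a + c) (b + e).
Proof. by move=> ab ce i im; rewrite !coefD ab // ce. Qed.

Lemma eqmodXnB m a b c e : eqmodXn m a b -> eqmodXn m c e -> eqmodXn m (a - c) (b - e).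
Proof. by move=> ab ce i im; rewrite !coefB ab // ce. Qed.

Lemma eqmodXnM m a b c e : eqmodXn m a b -> eqmodXn m c e -> eqmodXn m (a * c) (b * e).
Proof.
move=> ab ce i im; rewrite !coefM; apply: eq_bigr => -[j /= ji] _.
by rewrite ab ?ce // (leq_ltn_trans _ im) // ?leq_subr // -ltnS (leq_trans ji).
Qed.

Lemma eqmodXnX m a b n : eqmodXn m a b -> eqmodXn m (a ^+ n) (b ^+ n).
Proof. by move=> ab; elim: n => [|n IH] //; rewrite !exprS; apply: eqmodXnM. Qed.

Lemma eqmodXn_Xn0 m t : (m <= t)%N -> eqmodXn m 'X^t 0.
Proof. by move=> mt i im; rewrite coefXn coef0 (ltn_eqF (leq_trans im mt)). Qed.

Lemma eqmodXn_prod m (I : Type) (s : seq I) (P : pred I) (F G : I -> {poly R}) :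
  (forall i, P i -> eqmodXn m (F i) (G i)) ->
  eqmodXn m (\prod_(i <- s | P i) F i) (\prod_(i <- s | P i) G i).
Proof. by move=> FG; apply: (big_ind2 (eqmodXn m)) => //; apply: eqmodXnM. Qed.

Lemma eqmodXn_sum m (I : Type) (s : seq I) (P : pred I) (F G : I -> {poly R}) :
  (forall i, P i -> eqmodXn m (F i) (G i)) ->
  eqmodXn m (\sum_(i <- s | P i) F i) (\sum_(i <- s | P i) G i).
Proof. by move=> FG; apply: (big_ind2 (eqmodXn m)) => //; apply: eqmodXnD. Qed.

Lemma eqmodXn_prod1 m (I : Type) (s : seq I) (P : pred I) (F : I -> {poly R}) :
  (forall i, P i -> eqmodXn m (F i) 1) -> eqmodXn m (\prod_(i <- s | P i) F i) 1.
Proof. by move=> F1; have := eqmodXn_prod s F1; rewrite big1_eq. Qed.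

Lemma eqmodXn_sum0 m (I : Type) (s : seq I) (P : pred I) (F : I -> {poly R}) :
  (forall i, P i -> eqmodXn m (F i) 0) -> eqmodXn m (\sum_(i <- s | P i) F i) 0.
Proof. by move=> F0; have := eqmodXn_sum s F0; rewrite big1_eq. Qed.

End EqModXn.

Lemma f_trunc_eqmodXn r n N : (0 < r)%N -> (n <= N)%N ->
  eqmodXn n.+1 (f_trunc r N) (f_trunc r n).
Proof.
move=> r_gt0 nN; rewrite /f_trunc (big_cat_nat _ (n := n.+1)) //=.
rewrite -[X in eqmodXn _ _ X]mulr1; apply: eqmodXnM => //.
rewrite big_nat_cond; apply: eqmodXn_prod1 => i /andP[/andP[ni _] _].
rewrite -[X in eqmodXn _ _ X]subr0; apply: eqmodXnB => //; apply: eqmodXn_Xn0.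
by rewrite (leq_trans ni) // leq_pmull.
Qed.

Lemma inv_f1_trunc_eqmodXn n N : (n <= N)%N ->
  eqmodXn n.+1 (inv_f1_trunc N) (inv_f1_trunc n).
Proof.
move=> nN; rewrite /inv_f1_trunc (big_cat_nat _ (n := n.+1)) //=.
rewrite -[X in eqmodXn _ _ X]mulr1; apply: eqmodXnM.
  rewrite big_nat_cond [X in eqmodXn _ _ X]big_nat_cond.
  apply: eqmodXn_prod => i /andP[/andP[i_gt0 _] _].
  rewrite (big_cat_nat _ (n := n.+1)) //= -[X in eqmodXn _ _ X]addr0.
  apply: eqmodXnD => //; rewrite big_nat_cond.
  apply: eqmodXn_sum0 => j /andP[/andP[nj _] _].
  by apply: eqmodXn_Xn0; rewrite (leq_trans nj) // leq_pmull.
rewrite big_nat_cond; apply: eqmodXn_prod1 => i /andP[/andP[ni _] _].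
rewrite big_ltn // muln0 expr0 -[X in eqmodXn _ _ X]addr0; apply: eqmodXnD => //.
rewrite big_nat_cond; apply: eqmodXn_sum0 => j /andP[/andP[j_gt0 _] _].
by apply: eqmodXn_Xn0; rewrite (leq_trans ni) // leq_pmulr.
Qed.

Definition d_poly (k N : nat) : {poly int} :=
  f_trunc 2 N ^+ k * inv_f1_trunc N ^+ (3 * k + 1).

Lemma coef_d_poly k n N : (n <= N)%N -> (d_poly k N)`_n = d k n.
Proof.
move=> nN; apply: (@eqmodXnM _ n.+1) => //; apply: eqmodXnX.
  exact: f_trunc_eqmodXn.
exact: inv_f1_trunc_eqmodXn.
Qed.

Lemma d_polyD k j N :
  d_poly (k + j) N = d_poly k N * (f_trunc 2 N * inv_f1_trunc N ^+ 3) ^+ j.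
Proof.
rewrite /d_poly exprMn -exprM mulnDr -addnA [(3 * j + 1)%N]addnC addnA.
by rewrite !exprD mulrACA.
Qed.

Lemma poly_expp_comp (R : comNzRingType) p (b : {poly R}) :
  p \in [pchar R] -> (forall i, b`_i ^+ p = b`_i) -> b ^+ p = b \Po 'X^p.
Proof.
move=> pcharRp bF; have pcharRXp : p \in [pchar {poly R}] by rewrite pchar_poly.
rewrite -(pFrobenius_autE pcharRXp) -{1}(coefK b) poly_def rmorph_sum comp_polyE.
apply: eq_bigr => i _; rewrite /= pFrobenius_autE -!mul_polyC exprMn -polyC_exp.
by rewrite bF -!exprM mulnC.
Qed.

Lemma map_intr_expp_comp (R : comNzRingType) p (a : {poly int}) :
  p \in [pchar R] ->
  (map_poly intr a : {poly R}) ^+ p = map_poly intr a \Po 'X^p.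
Proof.
move=> pcharRp; apply: poly_expp_comp => // i.
by rewrite coef_map /= -(pFrobenius_autE pcharRp) pFrobenius_aut_int.
Qed.

Lemma coef_mul_comp_Xn_eq0 (R : nzSemiRingType) (a b : {poly R}) p r N :
  (0 < p)%N -> (forall i, (i <= N)%N -> i = r %[mod p] -> a`_i = 0) ->
  forall i, (i <= N)%N -> i = r %[mod p] -> (a * (b \Po 'X^p))`_i = 0.
Proof.
move=> p_gt0 a0 i iN ir; rewrite coefM big1 // => -[j /= ji] _.
rewrite coef_comp_poly_Xn //; case: dvdnP => [[m jE]|_]; last by rewrite mulr0.
have ji' : (j <= i)%N by [].
rewrite a0 ?mul0r ?(leq_trans ji' iN) //.
by rewrite -ir -[in RHS](subnKC ji') jE addnC modnMDl.
Qed.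

Theorem theorem4p4 (p k j r : nat) :
  prime p -> (1 <= k)%N -> (1 <= r)%N -> (r <= p - 1)%N ->
  (forall n : nat, (p%:Z %| d k (p * n + r))%Z) ->
  forall n : nat, (p%:Z %| d (p * j + k) (p * n + r))%Z.
Proof.
move=> p_pr _ _ r_le n_dk n.
have p_gt0 := prime_gt0 p_pr; have pcharFp := pchar_Fp p_pr.
have r_lt_p : (r < p)%N by rewrite (leq_ltn_trans r_le) // subn1 ltn_predL.
rewrite (dvdz_pcharf pcharFp) -(coef_d_poly _ (leqnn _)) -coef_map.
rewrite [(p * j + k)%N]addnC d_polyD [(p * j)%N]mulnC exprM.
rewrite rmorphM rmorphXn /= map_intr_expp_comp //.
apply/eqP/(coef_mul_comp_Xn_eq0 _ p_gt0 _ (leqnn _)); last by rewrite mulnC modnMDl.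
move=> i iM ir; rewrite coef_map /= coef_d_poly //.
have -> : i = (p * (i %/ p) + r)%N by rewrite {1}(divn_eq i p) ir modn_small // mulnC.
by apply/eqP; rewrite -(dvdz_pcharf pcharFp).
Qed.
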